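(* Let $\Gamma$ be a Deza graph with parameters $(n,k,k-1,a)$, $k>1$, $\beta=1$. If $x$ is an $A$-vertex of $\Gamma$, then $N(x)\setminus\{x_b\}=N(x_b)\setminus\{x\}$.
   Context: A Deza graph with parameters $(n,k,b,a)$, $a\le b$, is a $k$-regular graph on $n$ vertices in which any two distinct vertices have $a$ or $b$ common neighbours; $\beta$ is the number of vertices $u\ne v$ with exactly $b$ common neighbours with a given vertex $v$ (independent of $v$). Since $\beta=1$, for each vertex $x$ let $x_b$ denote the unique vertex having $b=k-1$ common neighbours with $x$. $N(x)$ is the set of neighbours of $x$. A vertex $x$ is an $A$-vertex if $x$ is adjacent to $x_b$, and an $NA$-vertex otherwise. *)

From mathcomp Require Import all_boot.
Set Implicit Arguments. Unset Strict Implicit. Unset Printing Implicit Defensive.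

Definition simple_graph (T : finType) (e : rel T) : Prop :=
  symmetric e /\ irreflexive e.

Definition nbhd (T : finType) (e : rel T) (x : T) : {set T} := [set y | e x y].

Definition ncommon (T : finType) (e : rel T) (x y : T) : nat :=
  #|nbhd e x :&: nbhd e y|.

Definition deza_graph (T : finType) (e : rel T) (n k b a : nat) : Prop :=
  [/\ simple_graph e, #|T| = n, a <= b,
      (forall x, #|nbhd e x| = k) &
      (forall x y, x != y -> ncommon e x y = a \/ ncommon e x y = b)].

Definition bset (T : finType) (e : rel T) (b : nat) (v : T) : {set T} :=
  [set u | (u != v) && (ncommon e v u == b)].

Definition has_beta (T : finType) (e : rel T) (b beta : nat) : Prop :=
  forall v, #|bset e b v| = beta.

From mathcomp Require Import all_boot.

Set Implicit Arguments.
Unset Strict Implicit.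

(* If x ~ y share deg(x) - 1 common neighbours, then, since y itself is a neighbour of x
   but not of y, every other neighbour of x is common; by symmetry the same holds for y. *)

Lemma setI_eq_setD1 (T : finType) (A B : {set T}) (y : T) :
  y \in A -> y \notin B -> #|A :&: B| = #|A|.-1 -> A :&: B = A :\ y.
Proof.
move=> yA yNB cardAB; apply/eqP; rewrite eqEcard; apply/andP; split.
  apply/subsetP=> z; rewrite !inE => /andP [zA zB]; rewrite zA andbT.
  by apply: contraNneq yNB => <-.
by rewrite cardAB (cardsD1 y A) yA.
Qed.

Lemma ncommonC (T : finType) (e : rel T) (x y : T) :
  ncommon e x y = ncommon e y x.
Proof. by rewrite /ncommon setIC. Qed.

Lemma setI_nbhd_adj (T : finType) (e : rel T) (x y : T) :
  irreflexive e -> e x y -> ncommon e x y = #|nbhd e x|.-1 ->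
  nbhd e x :&: nbhd e y = nbhd e x :\ y.
Proof.
move=> irr exy; apply: setI_eq_setD1; first by rewrite inE.
by rewrite inE irr.
Qed.

Theorem lemma2 (T : finType) (e : rel T) (n k a : nat) (x xb : T) :
  deza_graph e n k k.-1 a -> 1 < k -> has_beta e k.-1 1 ->
  xb \in bset e k.-1 x ->
  e x xb ->
  nbhd e x :\ xb = nbhd e xb :\ x.
Proof.
move=> [[sym irr] _ _ deg _] _ _ /setIdP [_ /eqP common] exb.
have ebx : e xb x by rewrite sym.
rewrite -(setI_nbhd_adj irr exb) ?deg // -(setI_nbhd_adj irr ebx) ?deg.
  by rewrite setIC.
by rewrite ncommonC.
Qed.
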